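(* Let $n\ge 2$ be an integer, let $a_1,\dots,a_n>0$ with $\sum_{k=1}^n a_k=1$, and let $c_k,d_k,\beta_k\in\mathbb{R}$ ($k=1,\dots,n$) with $\max_{1\le k\le n}|d_k|<1$. Put $\alpha_1=0$, $\alpha_k=\sum_{j=1}^{k-1}a_j$ for $k=2,\dots,n+1$, and $S_k(x)=a_kx+\alpha_k$. Let $f\in C[0;1]$ be a continuous function satisfying $f=G(f)$, where $$[G(f)](t)=\sum_{k=1}^n\bigl(d_k f(S_k^{-1}(t))+c_k t+\beta_k\bigr)\chi_{I_k}(t),\qquad I_1=[0;\alpha_2],\ I_k=(\alpha_k;\alpha_{k+1}]\ (k\ge2).$$ Suppose $|d_i|<a_i$ for all $i=1,\dots,n$. Then $f$ satisfies the Hölder condition for every exponent $\alpha\in(0;1]$; in particular $f$ is Lipschitz: there is $C\ge0$ with $|f(x)-f(y)|\le C|x-y|$ for all $x,y\in[0;1]$.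
   Context: Here $\chi_I$ is the indicator function of the interval $I$. A continuous function $f$ with $G(f)=f$ is called an (affine) self-similar function with self-similarity parameters $\{a_k\},\{c_k\},\{d_k\},\{\beta_k\}$. A function $f$ on $[0;1]$ satisfies the Hölder condition with exponent $\alpha\in(0;1]$ if $\sup_{x\ne y}|f(x)-f(y)|/|x-y|^\alpha<\infty$. *)

(* concrete reals R. Indices k range over 1..n. *)
From Stdlib Require Import Reals Lra Lia.
Open Scope R_scope.

Fixpoint psum (a : nat -> R) (m : nat) : R :=
  match m with
  | O => 0
  | S m' => psum a m' + a (S m')
  end.

Definition alpha (a : nat -> R) (k : nat) : R := psum a (k - 1).

Definition Sinv (a : nat -> R) (k : nat) (t : R) : R := (t - alpha a k) / a k.

Definition chiI (a : nat -> R) (k : nat) (t : R) : R :=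
  if Nat.eqb k 1 then
    (if Rle_dec 0 t then (if Rle_dec t (alpha a 2) then 1 else 0) else 0)
  else
    (if Rlt_dec (alpha a k) t then (if Rle_dec t (alpha a (S k)) then 1 else 0) else 0).

Fixpoint sum1 (F : nat -> R) (m : nat) : R :=
  match m with
  | O => 0
  | S m' => sum1 F m' + F (S m')
  end.

Definition G (n : nat) (a c d beta : nat -> R) (f : R -> R) (t : R) : R :=
  sum1 (fun k => (d k * f (Sinv a k t) + c k * t + beta k) * chiI a k t) n.

Definition continuous_on01 (f : R -> R) : Prop :=
  forall x, 0 <= x <= 1 -> forall eps, 0 < eps ->
    exists delta, 0 < delta /\
      forall y, 0 <= y <= 1 -> Rabs (y - x) < delta -> Rabs (f y - f x) < eps.

Definition holder01 (f : R -> R) (al : R) : Prop :=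
  exists C, forall x y, 0 <= x <= 1 -> 0 <= y <= 1 -> x <> y ->
    Rabs (f x - f y) <= C * Rpower (Rabs (x - y)) al.

From Stdlib Require Import Reals Lra Lia.
Open Scope R_scope.

(* The fixed-point equation says that on each piece [alpha_k, alpha_(k+1)] the function f is
   the affine image, with vertical factor d_k and horizontal factor a_k, of f itself plus a
   linear term.  With rho = max |d_k| / a_k < 1, an estimate
   |f x - f y| <= K |x - y| + E on [0, 1] therefore improves to the same estimate with error
   rho E: inside one piece it is inherited from f through the rescaling, and across pieces
   the errors only enter on the two end pieces, since the values of f at the nodes alpha_k
   are controlled exactly by |f 0 - f 1|.  Starting from E = 2 sup |f| and letting
   rho^m E -> 0 gives the Lipschitz bound, and Hoelder bounds follow as |x - y| <= 1. *)

Lemma Rle_Rpower_base_le1 (r al : R) : 0 < r <= 1 -> 0 < al <= 1 -> r <= Rpower r al.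
Proof.
  intros Hr Hal.
  assert (Hsplit : r = Rpower r al * Rpower r (1 - al))
    by (rewrite <- Rpower_plus, Rplus_minus, Rpower_1; lra).
  assert (Hle1 : Rpower r (1 - al) <= 1).
  { replace 1 with (Rpower 1 (1 - al)) at 2
      by (unfold Rpower; rewrite ln_1, Rmult_0_r; apply exp_0).
    apply Rle_Rpower_l; lra. }
  assert (Hpos : 0 < Rpower r al) by apply exp_pos.
  rewrite Hsplit at 1. nra.
Qed.

Lemma lipschitz01_holder01 (f : R -> R) (C al : R) : 0 <= C -> 0 < al <= 1 ->
  (forall x y, 0 <= x <= 1 -> 0 <= y <= 1 -> Rabs (f x - f y) <= C * Rabs (x - y)) ->
  holder01 f al.
Proof.
  intros HC Hal Hlip. exists C. intros x y Hx Hy Hxy.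
  eapply Rle_trans; [apply Hlip; assumption|].
  apply Rmult_le_compat_l; [assumption|].
  apply Rle_Rpower_base_le1; [|assumption]. split.
  - apply Rabs_pos_lt. lra.
  - apply Rabs_le. lra.
Qed.

Lemma le_of_le_plus_geometric (X Y r c : R) : 0 <= r < 1 ->
  (forall m, X <= Y + r ^ m * c) -> X <= Y.
Proof.
  intros Hr H. apply Rnot_lt_le. intros HYX.
  destruct (pow_lt_1_zero r ltac:(rewrite Rabs_pos_eq; lra) ((X - Y) / (Rabs c + 1)))
    as [N HN].
  { apply Rdiv_lt_0_compat; [lra|]. pose proof (Rabs_pos c). lra. }
  specialize (HN N (le_n N)). specialize (H N).
  rewrite Rabs_pos_eq in HN by (apply pow_le; lra).
  assert (Hc : r ^ N * c <= r ^ N * (Rabs c + 1)).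
  { apply Rmult_le_compat_l; [apply pow_le; lra|]. pose proof (Rle_abs c). lra. }
  apply Rmult_lt_compat_r with (r := Rabs c + 1) in HN; [|pose proof (Rabs_pos c); lra].
  unfold Rdiv in HN. rewrite Rmult_assoc, Rinv_l, Rmult_1_r in HN
    by (pose proof (Rabs_pos c); lra).
  lra.
Qed.

Lemma Rabs_telescope_le (s t : nat -> R) (K : R) (p r : nat) :
  (forall l, (p <= l < p + r)%nat -> Rabs (s l - s (S l)) <= K * (t (S l) - t l)) ->
  Rabs (s p - s (p + r)%nat) <= K * (t (p + r)%nat - t p).
Proof.
  induction r as [|r IH]; intros Hstep.
  - rewrite Nat.add_0_r, !Rminus_diag, Rabs_R0. lra.
  - rewrite Nat.add_succ_r.
    pose proof (Hstep (p + r)%nat ltac:(lia)) as Hlast.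
    assert (Hinit : Rabs (s p - s (p + r)%nat) <= K * (t (p + r)%nat - t p))
      by (apply IH; intros l Hl; apply Hstep; lia).
    replace (s p - s (S (p + r))) with ((s p - s (p + r)%nat) + (s (p + r)%nat - s (S (p + r))))
      by ring.
    eapply Rle_trans; [apply Rabs_triang|]. lra.
Qed.

Lemma sum1_eq0 (F : nat -> R) (m : nat) :
  (forall j, (1 <= j <= m)%nat -> F j = 0) -> sum1 F m = 0.
Proof.
  induction m as [|m IH]; intros HF; simpl; [reflexivity|].
  rewrite IH, HF; [ring|lia|]. intros j Hj. apply HF. lia.
Qed.

Lemma sum1_single (F : nat -> R) (m k : nat) : (1 <= k <= m)%nat ->
  (forall j, (1 <= j <= m)%nat -> j <> k -> F j = 0) -> sum1 F m = F k.
Proof.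
  induction m as [|m IH]; intros Hk HF; [lia|simpl].
  destruct (Nat.eq_dec k (S m)) as [->|Hne].
  - rewrite sum1_eq0; [ring|]. intros j Hj. apply HF; lia.
  - rewrite IH, (HF (S m)); [ring|lia|congruence|lia|].
    intros j Hj Hjk. apply HF; lia.
Qed.

Fixpoint max_upto (g : nat -> R) (m : nat) : R :=
  match m with O => 0 | S m' => Rmax (max_upto g m') (g (S m')) end.

Lemma max_upto_ge0 (g : nat -> R) (m : nat) : 0 <= max_upto g m.
Proof.
  induction m as [|m IH]; simpl; [lra|].
  eapply Rle_trans; [apply IH|apply Rmax_l].
Qed.

Lemma max_upto_ub (g : nat -> R) (m k : nat) : (1 <= k <= m)%nat -> g k <= max_upto g m.
Proof.
  induction m as [|m IH]; intros Hk; simpl; [lia|].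
  destruct (Nat.eq_dec k (S m)) as [->|Hne]; [apply Rmax_r|].
  eapply Rle_trans; [apply IH; lia|apply Rmax_l].
Qed.

Lemma max_upto_lt (g : nat -> R) (m : nat) (b : R) : 0 < b ->
  (forall k, (1 <= k <= m)%nat -> g k < b) -> max_upto g m < b.
Proof.
  induction m as [|m IH]; intros Hb Hg; simpl; [assumption|].
  apply Rmax_lub_lt; [apply IH; [assumption|]|apply Hg; lia].
  intros k Hk. apply Hg. lia.
Qed.

Lemma finite_ratio_lt1 (u v : nat -> R) (m : nat) :
  (forall k, (1 <= k <= m)%nat -> 0 < v k) -> (forall k, (1 <= k <= m)%nat -> Rabs (u k) < v k) ->
  exists rho, 0 <= rho < 1 /\ forall k, (1 <= k <= m)%nat -> Rabs (u k) <= rho * v k.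
Proof.
  intros Hv Huv. exists (max_upto (fun k => Rabs (u k) / v k) m). split; [split|].
  - apply max_upto_ge0.
  - apply max_upto_lt; [lra|]. intros k Hk. pose proof (Hv k Hk). pose proof (Huv k Hk).
    apply Rmult_lt_reg_r with (v k); [assumption|].
    unfold Rdiv. rewrite Rmult_assoc, Rinv_l, Rmult_1_r, Rmult_1_l by lra. assumption.
  - intros k Hk. pose proof (Hv k Hk).
    pose proof (max_upto_ub (fun k => Rabs (u k) / v k) m k Hk) as Hub. cbv beta in Hub.
    replace (Rabs (u k)) with (Rabs (u k) / v k * v k) by (field; lra).
    apply Rmult_le_compat_r; lra.
Qed.

Lemma finite_abs_bounded (u : nat -> R) (m : nat) :
  exists M, 0 <= M /\ forall k, (1 <= k <= m)%nat -> Rabs (u k) <= M.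
Proof.
  exists (max_upto (fun k => Rabs (u k)) m). split; [apply max_upto_ge0|].
  intros k Hk. exact (max_upto_ub (fun k => Rabs (u k)) m k Hk).
Qed.

Definition clamp01 (x : R) : R := Rmax 0 (Rmin 1 x).

Lemma clamp01_id (x : R) : 0 <= x <= 1 -> clamp01 x = x.
Proof. intros Hx. unfold clamp01. rewrite Rmin_right, Rmax_right; lra. Qed.

Lemma clamp01_range (y : R) : 0 <= clamp01 y <= 1.
Proof. unfold clamp01, Rmax, Rmin. repeat destruct Rle_dec; lra. Qed.

Lemma clamp01_dist (x y : R) : 0 <= x <= 1 -> Rabs (clamp01 y - x) <= Rabs (y - x).
Proof.
  intros Hx. unfold clamp01, Rmax, Rmin, Rabs.
  repeat destruct Rle_dec; repeat destruct Rcase_abs; lra.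
Qed.

Lemma continuous_on01_bounded (f : R -> R) : continuous_on01 f ->
  exists B, forall x, 0 <= x <= 1 -> Rabs (f x) <= B.
Proof.
  (* [continuity_ab_maj] needs continuity on R at each point of [0, 1]; precomposing with
     the clamp provides it. *)
  intros Hf.
  destruct (continuity_ab_maj (fun x => Rabs (f (clamp01 x))) 0 1) as [xm [Hxm _]]; [lra| |].
  - intros x Hx eps Heps. destruct (Hf x Hx eps Heps) as [delta [Hdelta Hclose]].
    exists delta. split; [assumption|]. intros y [_ Hy]. simpl in *. unfold R_dist in *.
    rewrite (clamp01_id x Hx).
    eapply Rle_lt_trans; [apply Rabs_triang_inv2|].
    apply Hclose; [apply clamp01_range|].
    eapply Rle_lt_trans; [apply clamp01_dist|]; assumption.
  - exists (Rabs (f (clamp01 xm))). intros x Hx.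
    rewrite <- (clamp01_id x Hx). apply Hxm. assumption.
Qed.

Definition right_continuous_at (f : R -> R) (p : R) : Prop :=
  forall eps, 0 < eps -> exists delta, 0 < delta /\
    forall h, 0 < h < delta -> Rabs (f (p + h) - f p) < eps.

Lemma continuous_on01_right (f : R -> R) (p : R) :
  continuous_on01 f -> 0 <= p < 1 -> right_continuous_at f p.
Proof.
  intros Hf Hp eps Heps.
  destruct (Hf p ltac:(lra) eps Heps) as [delta [Hdelta Hclose]].
  exists (Rmin delta (1 - p)). split; [apply Rmin_glb_lt; lra|].
  intros h Hh. pose proof (Rmin_l delta (1 - p)). pose proof (Rmin_r delta (1 - p)).
  apply Hclose; [lra|]. replace (p + h - p) with h by ring. rewrite Rabs_pos_eq; lra.
Qed.

Lemma right_continuous_rescale (f : R -> R) (p s d c b : R) :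
  right_continuous_at f 0 -> 0 < s ->
  right_continuous_at (fun t => d * f ((t - p) / s) + c * t + b) p.
Proof.
  intros Hf Hs eps Heps.
  destruct (Hf (eps / 2 / (Rabs d + 1))) as [delta [Hdelta Hclose]].
  { pose proof (Rabs_pos d). apply Rdiv_lt_0_compat; lra. }
  exists (Rmin (s * delta) (eps / 2 / (Rabs c + 1))). split.
  { pose proof (Rabs_pos c). apply Rmin_glb_lt; [nra|apply Rdiv_lt_0_compat; lra]. }
  intros h [Hh Hhmin].
  pose proof (Rmin_l (s * delta) (eps / 2 / (Rabs c + 1))) as Hmin1.
  pose proof (Rmin_r (s * delta) (eps / 2 / (Rabs c + 1))) as Hmin2.
  replace ((p + h - p) / s) with (0 + h / s) by (field; lra).
  replace ((p - p) / s) with 0 by (field; lra).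
  assert (Hfh : Rabs (f (0 + h / s) - f 0) < eps / 2 / (Rabs d + 1)).
  { apply Hclose. split.
    - apply Rdiv_lt_0_compat; lra.
    - apply Rmult_lt_reg_l with s; [lra|]. unfold Rdiv. rewrite <- Rmult_assoc, Rinv_r_simpl_m; lra. }
  assert (Hd : Rabs d * Rabs (f (0 + h / s) - f 0) <= eps / 2).
  { apply Rle_trans with ((Rabs d + 1) * (eps / 2 / (Rabs d + 1))).
    - pose proof (Rabs_pos d). pose proof (Rabs_pos (f (0 + h / s) - f 0)). nra.
    - right. field. pose proof (Rabs_pos d). lra. }
  assert (Hc : Rabs c * h < eps / 2).
  { apply Rle_lt_trans with ((Rabs c + 1) * h); [pose proof (Rabs_pos c); nra|].
    apply Rlt_le_trans with ((Rabs c + 1) * (eps / 2 / (Rabs c + 1))).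
    - pose proof (Rabs_pos c). apply Rmult_lt_compat_l; lra.
    - right. field. pose proof (Rabs_pos c). lra. }
  replace (d * f (0 + h / s) + c * (p + h) + b - (d * f 0 + c * p + b))
    with (d * (f (0 + h / s) - f 0) + c * h) by ring.
  eapply Rle_lt_trans; [apply Rabs_triang|].
  rewrite !Rabs_mult, (Rabs_pos_eq h) by lra. lra.
Qed.

Lemma right_continuous_agree (f g : R -> R) (p q : R) :
  right_continuous_at f p -> right_continuous_at g p -> 0 < q ->
  (forall h, 0 < h < q -> f (p + h) = g (p + h)) -> f p = g p.
Proof.
  intros Hf Hg Hq Hfg.
  enough (Habs : Rabs (f p - g p) <= 0).
  { apply Rminus_diag_uniq. destruct (Req_dec (f p - g p) 0) as [E|E]; [exact E|].
    pose proof (Rabs_pos_lt _ E). lra. }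
  apply le_epsilon. intros eps Heps.
  destruct (Hf (eps / 2) ltac:(lra)) as [df [Hdf Hcf]].
  destruct (Hg (eps / 2) ltac:(lra)) as [dg [Hdg Hcg]].
  set (h := Rmin q (Rmin df dg) / 2).
  assert (Hh : 0 < h < q /\ h < df /\ h < dg).
  { unfold h. pose proof (Rmin_l q (Rmin df dg)). pose proof (Rmin_r q (Rmin df dg)).
    pose proof (Rmin_l df dg). pose proof (Rmin_r df dg).
    assert (0 < Rmin q (Rmin df dg)) by (repeat apply Rmin_glb_lt; lra). lra. }
  pose proof (Hcf h ltac:(lra)). pose proof (Hcg h ltac:(lra)).
  replace (f p - g p) with (- (f (p + h) - f p) + (g (p + h) - g p))
    by (rewrite (Hfg h) by lra; ring).
  eapply Rle_trans; [apply Rabs_triang|]. rewrite Rabs_Ropp. lra.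
Qed.

Lemma alpha_1 (a : nat -> R) : alpha a 1 = 0.
Proof. reflexivity. Qed.

Lemma alpha_S (a : nat -> R) (k : nat) : (1 <= k)%nat -> alpha a (S k) = alpha a k + a k.
Proof.
  intros Hk. destruct k as [|k]; [lia|]. unfold alpha. simpl. rewrite Nat.sub_0_r. reflexivity.
Qed.

Lemma Sinv_spec (a : nat -> R) (k : nat) (t : R) : 0 < a k ->
  a k * Sinv a k t = t - alpha a k.
Proof. intros Hak. unfold Sinv. field. lra. Qed.

Section Partition.

Variables (n : nat) (a : nat -> R).
Hypothesis a_pos : forall k, (1 <= k <= n)%nat -> 0 < a k.
Hypothesis a_sum : psum a n = 1.

Lemma pieces_nonempty : (1 <= n)%nat.
Proof. destruct n; [simpl in a_sum; lra|lia]. Qed.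

Lemma alpha_le (p q : nat) : (1 <= p <= q)%nat -> (q <= S n)%nat -> alpha a p <= alpha a q.
Proof.
  intros Hpq Hq. induction q as [|q IH]; [lia|].
  destruct (Nat.eq_dec p (S q)) as [->|Hne]; [lra|].
  rewrite alpha_S by lia. pose proof (a_pos q ltac:(lia)). pose proof (IH ltac:(lia) ltac:(lia)).
  lra.
Qed.

Lemma alpha_last : alpha a (S n) = 1.
Proof. unfold alpha. simpl. rewrite Nat.sub_0_r. exact a_sum. Qed.

Lemma alpha_bounds (k : nat) : (1 <= k <= S n)%nat -> 0 <= alpha a k <= 1.
Proof.
  intros Hk. rewrite <- (alpha_1 a), <- alpha_last. split; apply alpha_le; lia.
Qed.

Lemma piece_cover (x : R) : 0 <= x <= 1 ->
  exists k, (1 <= k <= n)%nat /\ alpha a k <= x <= alpha a (S k).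
Proof.
  intros Hx.
  enough (Hm : forall m, (1 <= m <= n)%nat -> x <= alpha a (S m) ->
            exists k, (1 <= k <= m)%nat /\ alpha a k <= x <= alpha a (S k)).
  { pose proof pieces_nonempty.
    destruct (Hm n) as [k [Hk Hxk]]; [lia|rewrite alpha_last; lra|].
    exists k. split; [lia|assumption]. }
  induction m as [|m IH]; intros Hm Hxm; [lia|].
  destruct (Nat.eq_dec m 0) as [->|Hm0].
  - exists 1%nat. rewrite alpha_1. split; [lia|lra].
  - destruct (Rle_dec x (alpha a (S m))) as [Hle|Hgt].
    + destruct IH as [k [Hk Hxk]]; [lia|assumption|]. exists k. split; [lia|assumption].
    + exists (S m). split; [lia|lra].
Qed.

End Partition.

Section FixedPoint.

Variables (n : nat) (a c d beta : nat -> R) (f : R -> R).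
Hypothesis a_pos : forall k, (1 <= k <= n)%nat -> 0 < a k.
Hypothesis a_sum : psum a n = 1.

Lemma chiI_open_piece (j k : nat) (t : R) : (1 <= j <= n)%nat -> (1 <= k <= n)%nat ->
  alpha a k < t <= alpha a (S k) -> chiI a j t = if Nat.eqb j k then 1 else 0.
Proof.
  intros Hj Hk Ht. pose proof (alpha_bounds n a a_pos a_sum k ltac:(lia)).
  unfold chiI.
  destruct (Nat.eqb_spec j k) as [->|Hjk].
  - destruct (Nat.eqb_spec k 1) as [->|_];
      repeat destruct Rle_dec; repeat destruct Rlt_dec; lra.
  - destruct (Nat.lt_ge_cases j k) as [Hlt|Hge].
    + pose proof (alpha_le n a a_pos (S j) k ltac:(lia) ltac:(lia)).
      destruct (Nat.eqb_spec j 1) as [->|_];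
        repeat destruct Rle_dec; repeat destruct Rlt_dec; lra.
    + pose proof (alpha_le n a a_pos (S k) j ltac:(lia) ltac:(lia)).
      destruct (Nat.eqb_spec j 1) as [->|_]; [lia|].
      repeat destruct Rle_dec; repeat destruct Rlt_dec; lra.
Qed.

Lemma G_open_piece (k : nat) (t : R) : (1 <= k <= n)%nat ->
  alpha a k < t <= alpha a (S k) -> G n a c d beta f t = d k * f (Sinv a k t) + c k * t + beta k.
Proof.
  intros Hk Ht. unfold G.
  rewrite (sum1_single _ n k Hk), (chiI_open_piece k k t Hk Hk Ht), Nat.eqb_refl; [ring|].
  intros j Hj Hjk. rewrite (chiI_open_piece j k t Hj Hk Ht).
  apply Nat.eqb_neq in Hjk. rewrite Hjk. ring.
Qed.

Hypothesis f_cont : continuous_on01 f.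
Hypothesis f_fix : forall t, 0 <= t <= 1 -> f t = G n a c d beta f t.

(* On the half-open pieces this is the fixed-point equation; the left endpoints, where [G]
   uses the previous piece, follow by right continuity. *)
Lemma fixpoint_on_piece (k : nat) (t : R) : (1 <= k <= n)%nat ->
  alpha a k <= t <= alpha a (S k) -> f t = d k * f (Sinv a k t) + c k * t + beta k.
Proof.
  intros Hk Ht.
  pose proof (a_pos k Hk) as Hak. pose proof (alpha_S a k ltac:(lia)) as HS.
  pose proof (alpha_bounds n a a_pos a_sum k ltac:(lia)).
  pose proof (alpha_bounds n a a_pos a_sum (S k) ltac:(lia)).
  assert (Hopen : forall u, alpha a k < u <= alpha a (S k) ->
            f u = d k * f (Sinv a k u) + c k * u + beta k).
  { intros u Hu. rewrite <- G_open_piece by assumption. apply f_fix. lra. }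
  destruct (Rle_lt_or_eq_dec _ _ (proj1 Ht)) as [Hlt|<-]; [apply Hopen; lra|].
  apply (right_continuous_agree f (fun u => d k * f (Sinv a k u) + c k * u + beta k)
           (alpha a k) (a k)).
  - apply continuous_on01_right; [assumption|lra].
  - unfold Sinv. apply right_continuous_rescale; [|lra].
    apply continuous_on01_right; [assumption|lra].
  - assumption.
  - intros h Hh. apply Hopen. lra.
Qed.

End FixedPoint.

Definition approx_lipschitz01 (f : R -> R) (K E : R) : Prop :=
  forall x y, 0 <= x <= 1 -> 0 <= y <= 1 -> x <= y -> Rabs (f x - f y) <= K * (y - x) + E.

Lemma approx_lipschitz01_bounded (f : R -> R) (K B : R) : 0 <= K ->
  (forall x, 0 <= x <= 1 -> Rabs (f x) <= B) -> approx_lipschitz01 f K (2 * B).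
Proof.
  intros HK HB x y Hx Hy Hxy.
  pose proof (HB x Hx). pose proof (HB y Hy). pose proof (Rabs_triang (f x) (- f y)).
  rewrite Rabs_Ropp in *. unfold Rminus at 1.
  assert (0 <= K * (y - x)) by (apply Rmult_le_pos; lra). lra.
Qed.

Lemma approx_lipschitz01_limit (f : R -> R) (K rho E : R) : 0 <= rho < 1 ->
  (forall m, approx_lipschitz01 f K (rho ^ m * E)) ->
  forall x y, 0 <= x <= 1 -> 0 <= y <= 1 -> Rabs (f x - f y) <= K * Rabs (x - y).
Proof.
  intros Hrho Happrox x y Hx Hy.
  destruct (Rle_dec x y) as [Hxy|Hxy].
  - rewrite (Rabs_minus_sym x y), (Rabs_pos_eq (y - x)) by lra.
    apply (le_of_le_plus_geometric _ _ rho E Hrho). intros m. apply Happrox; assumption.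
  - rewrite (Rabs_minus_sym (f x)), (Rabs_pos_eq (x - y)) by lra.
    apply (le_of_le_plus_geometric _ _ rho E Hrho). intros m. apply Happrox; lra.
Qed.

Section SelfAffineLipschitz.

Variables (n : nat) (a c d beta : nat -> R) (f : R -> R) (rho cm K : R).
Hypothesis a_pos : forall k, (1 <= k <= n)%nat -> 0 < a k.
Hypothesis a_sum : psum a n = 1.
Hypothesis f_piece : forall k t, (1 <= k <= n)%nat -> alpha a k <= t <= alpha a (S k) ->
  f t = d k * f (Sinv a k t) + c k * t + beta k.
Hypothesis rho_range : 0 <= rho < 1.
Hypothesis d_small : forall k, (1 <= k <= n)%nat -> Rabs (d k) <= rho * a k.
Hypothesis c_bounded : forall k, (1 <= k <= n)%nat -> Rabs (c k) <= cm.
Hypothesis K_ends : Rabs (f 0 - f 1) <= K.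
Hypothesis K_stable : rho * K + cm <= K.

Lemma Sinv_piece_range (k : nat) (t : R) : (1 <= k <= n)%nat ->
  alpha a k <= t <= alpha a (S k) -> 0 <= Sinv a k t <= 1.
Proof.
  intros Hk Ht. pose proof (a_pos k Hk). pose proof (Sinv_spec a k t ltac:(lra)).
  rewrite alpha_S in Ht by lia. nra.
Qed.

Lemma piece_estimate (k : nat) (u v : R) : (1 <= k <= n)%nat ->
  alpha a k <= u -> u <= v -> v <= alpha a (S k) ->
  Rabs (f u - f v) <= rho * a k * Rabs (f (Sinv a k u) - f (Sinv a k v)) + cm * (v - u).
Proof.
  intros Hk Hu Huv Hv.
  rewrite (f_piece k u), (f_piece k v) by (assumption || lra).
  replace (d k * f (Sinv a k u) + c k * u + beta k - (d k * f (Sinv a k v) + c k * v + beta k))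
    with (d k * (f (Sinv a k u) - f (Sinv a k v)) + c k * (u - v)) by ring.
  eapply Rle_trans; [apply Rabs_triang|].
  rewrite !Rabs_mult, (Rabs_minus_sym u v), (Rabs_pos_eq (v - u)) by lra.
  apply Rplus_le_compat; apply Rmult_le_compat_r;
    solve [apply Rabs_pos | lra | apply d_small, Hk | apply c_bounded, Hk].
Qed.

Lemma node_step (l : nat) : (1 <= l <= n)%nat ->
  Rabs (f (alpha a l) - f (alpha a (S l))) <= K * a l.
Proof.
  intros Hl. pose proof (a_pos l Hl). pose proof (alpha_S a l ltac:(lia)) as HS.
  eapply Rle_trans; [apply (piece_estimate l); [assumption|lra..]|].
  assert (Hs0 : Sinv a l (alpha a l) = 0) by (unfold Sinv; field; lra).
  assert (Hs1 : Sinv a l (alpha a (S l)) = 1) by (unfold Sinv; rewrite HS; field; lra).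
  rewrite Hs0, Hs1, HS. replace (alpha a l + a l - alpha a l) with (a l) by ring.
  assert (rho * a l * Rabs (f 0 - f 1) <= rho * a l * K)
    by (apply Rmult_le_compat_l; [apply Rmult_le_pos|]; lra).
  nra.
Qed.

Lemma node_lipschitz (p q : nat) : (1 <= p <= q)%nat -> (q <= S n)%nat ->
  Rabs (f (alpha a p) - f (alpha a q)) <= K * (alpha a q - alpha a p).
Proof.
  intros Hpq Hq. replace q with (p + (q - p))%nat by lia.
  apply (Rabs_telescope_le (fun l => f (alpha a l)) (alpha a)).
  intros l Hl. replace (alpha a (S l) - alpha a l) with (a l) by (rewrite alpha_S by lia; ring).
  apply node_step. lia.
Qed.

Section Contraction.

Variable E : R.
Hypothesis E_nonneg : 0 <= E.
Hypothesis f_approx : approx_lipschitz01 f K E.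

Lemma approx_lipschitz_piece (k : nat) (u v : R) : (1 <= k <= n)%nat ->
  alpha a k <= u -> u <= v -> v <= alpha a (S k) ->
  Rabs (f u - f v) <= K * (v - u) + rho * a k * E.
Proof.
  intros Hk Hu Huv Hv.
  pose proof (a_pos k Hk). pose proof (alpha_S a k ltac:(lia)).
  pose proof (Sinv_spec a k u ltac:(lra)). pose proof (Sinv_spec a k v ltac:(lra)).
  assert (Hsuv : Rabs (f (Sinv a k u) - f (Sinv a k v))
                 <= K * (Sinv a k v - Sinv a k u) + E).
  { apply f_approx; try (apply Sinv_piece_range; [assumption|lra]).
    apply Rmult_le_reg_l with (a k); lra. }
  eapply Rle_trans; [apply piece_estimate; eassumption|].
  assert (Hscaled : rho * a k * Rabs (f (Sinv a k u) - f (Sinv a k v))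
                    <= rho * K * (v - u) + rho * a k * E).
  { apply Rle_trans with (rho * a k * (K * (Sinv a k v - Sinv a k u) + E)).
    - apply Rmult_le_compat_l; [nra|assumption].
    - nra. }
  nra.
Qed.

Lemma approx_lipschitz01_contract : approx_lipschitz01 f K (rho * E).
Proof.
  intros x y Hx Hy Hxy.
  destruct (piece_cover n a a_pos a_sum x Hx) as [i [Hi Hxi]].
  destruct (piece_cover n a a_pos a_sum y Hy) as [j [Hj Hyj]].
  assert (HrE : 0 <= rho * E) by nra.
  destruct (Nat.lt_ge_cases i j) as [Hij|Hji].
  - pose proof (alpha_le n a a_pos (S i) j ltac:(lia) ltac:(lia)).
    pose proof (approx_lipschitz_piece i x (alpha a (S i)) Hi ltac:(lra) ltac:(lra) ltac:(lra)).
    pose proof (node_lipschitz (S i) j ltac:(lia) ltac:(lia)).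
    pose proof (approx_lipschitz_piece j (alpha a j) y Hj ltac:(lra) ltac:(lra) ltac:(lra)).
    assert (Hsum : a i + a j <= 1).
    { pose proof (alpha_S a i ltac:(lia)). pose proof (alpha_S a j ltac:(lia)).
      pose proof (alpha_bounds n a a_pos a_sum i ltac:(lia)).
      pose proof (alpha_bounds n a a_pos a_sum (S j) ltac:(lia)). lra. }
    replace (f x - f y) with ((f x - f (alpha a (S i))) + (f (alpha a (S i)) - f (alpha a j))
                              + (f (alpha a j) - f y)) by ring.
    pose proof (Rabs_triang (f x - f (alpha a (S i)) + (f (alpha a (S i)) - f (alpha a j)))
                            (f (alpha a j) - f y)).
    pose proof (Rabs_triang (f x - f (alpha a (S i))) (f (alpha a (S i)) - f (alpha a j))).
    nra.
  - pose proof (alpha_le n a a_pos j i ltac:(lia) ltac:(lia)).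
    pose proof (approx_lipschitz_piece j x y Hj ltac:(lra) Hxy ltac:(lra)).
    pose proof (a_pos j Hj). pose proof (alpha_S a j ltac:(lia)).
    pose proof (alpha_bounds n a a_pos a_sum j ltac:(lia)).
    pose proof (alpha_bounds n a a_pos a_sum (S j) ltac:(lia)).
    nra.
Qed.

End Contraction.

Lemma self_affine_lipschitz (B : R) : (forall x, 0 <= x <= 1 -> Rabs (f x) <= B) ->
  forall x y, 0 <= x <= 1 -> 0 <= y <= 1 -> Rabs (f x - f y) <= K * Rabs (x - y).
Proof.
  intros HB. pose proof (Rabs_pos (f 0 - f 1)).
  pose proof (HB 0 ltac:(lra)). pose proof (Rabs_pos (f 0)).
  apply (approx_lipschitz01_limit f K rho (2 * B) rho_range).
  intros m. induction m as [|m IH].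
  - rewrite pow_O, Rmult_1_l. apply approx_lipschitz01_bounded; [lra|assumption].
  - rewrite <- tech_pow_Rmult, Rmult_assoc. apply approx_lipschitz01_contract; [|assumption].
    apply Rmult_le_pos; [apply pow_le|]; lra.
Qed.

End SelfAffineLipschitz.

Theorem theorem5 (n : nat) (a c d beta : nat -> R) (f : R -> R) :
  (2 <= n)%nat ->
  (forall k, (1 <= k <= n)%nat -> 0 < a k) ->
  psum a n = 1 ->
  (forall k, (1 <= k <= n)%nat -> Rabs (d k) < 1) ->
  continuous_on01 f ->
  (forall t, 0 <= t <= 1 -> f t = G n a c d beta f t) ->
  (forall i, (1 <= i <= n)%nat -> Rabs (d i) < a i) ->
  (forall al, 0 < al <= 1 -> holder01 f al) /\
  (exists C, 0 <= C /\ forall x y, 0 <= x <= 1 -> 0 <= y <= 1 ->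
     Rabs (f x - f y) <= C * Rabs (x - y)).
Proof.
  intros _ Ha Hsum _ Hcont Hfix Hda.
  destruct (finite_ratio_lt1 d a n Ha Hda) as [rho [Hrho Hd]].
  destruct (finite_abs_bounded c n) as [cm [Hcm Hc]].
  destruct (continuous_on01_bounded f Hcont) as [B HB].
  set (K := (Rabs (f 0 - f 1) + cm) / (1 - rho)).
  assert (HKeq : K * (1 - rho) = Rabs (f 0 - f 1) + cm) by (unfold K; field; lra).
  pose proof (Rabs_pos (f 0 - f 1)).
  assert (HK : 0 <= K)
    by (unfold K, Rdiv; apply Rmult_le_pos; [lra|left; apply Rinv_0_lt_compat; lra]).
  pose proof (self_affine_lipschitz n a c d beta f rho cm K Ha Hsum
                (fixpoint_on_piece n a c d beta f Ha Hsum Hcont Hfix) Hrho Hd Hc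
                ltac:(nra) ltac:(nra) B HB) as Hlip.
  split.
  - intros al Hal. exact (lipschitz01_holder01 f K al HK Hal Hlip).
  - exists K. split; assumption.
Qed.
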